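(* Let $\bar f:[a,b]\to\mathbb{R}_\mathcal{I}$ be continuous. If $\bar F:[a,b]\to\mathbb{R}_\mathcal{I}$ is a primitive of $\bar f$ on $[a,b]$, i.e. $\bar F'(x)=\bar f(x)$ for all $x\in[a,b]$, then $$\bar F(b)-\bar F(a)=(IR)\int_a^b\bar f(t)\,dt.$$
   Context: An interval number is a closed interval $\bar a=[a_l,a_r]$ with $a_l<a_r$ real; $\mathbb{R}_\mathcal{I}$ is the set of interval numbers. Write $a_c=(a_l+a_r)/2$, $a_w=(a_r-a_l)/2>0$, $\bar a=\langle a_c;a_w\rangle=[a_c-a_w,a_c+a_w]$. Operations: $\bar a+\bar b=\langle a_c+b_c;a_wb_w\rangle$, $\bar a-\bar b=\langle a_c-b_c;a_w/b_w\rangle$, $k\bar a=\langle ka_c;a_w^k\rangle$ for real $k$; for real $h\ne0$, $\bar c/h=\langle c_c/h;c_w^{1/h}\rangle$. Distance $d(\bar a,\bar b)=\sqrt{(a_c-b_c)^2+(\ln a_w-\ln b_w)^2}$; continuity and limits w.r.t. $d$. Derivative: $\bar F'(x)=\lim_{h\to0}\frac{\bar F(x+h)-\bar F(x)}{h}$. Interval Riemann integral: $\bar A=(IR)\int_a^b\bar f$ if for every $\varepsilon>0$ there is $\delta>0$ such that for every partition $a=t_0<\dots<t_n=b$ with mesh $<\delta$ and tags $\xi_i\in[t_{i-1},t_i]$, $d(\sum_i(t_i-t_{i-1})\bar f(\xi_i),\bar A)<\varepsilon$. *)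

From Stdlib Require Import Reals Lra.
Open Scope R_scope.

Record Inum := mkI { il : R; ir : R; ilr : il < ir }.

Definition icen (a : Inum) : R := (il a + ir a) / 2.
Definition iwid (a : Inum) : R := (ir a - il a) / 2.

Lemma ofcw_lt (c w : R) (H : 0 < w) : c - w < c + w.
Proof. lra. Qed.

Definition ofcw (c w : R) (H : 0 < w) : Inum := mkI (c - w) (c + w) (ofcw_lt c w H).

Lemma iwid_pos (a : Inum) : 0 < iwid a.
Proof. unfold iwid. destruct a as [l r h]; simpl. lra. Qed.

Lemma mul_pos_aux (x y : R) : 0 < x -> 0 < y -> 0 < x * y.
Proof. intros; apply Rmult_lt_0_compat; assumption. Qed.

Lemma div_pos_aux (x y : R) : 0 < x -> 0 < y -> 0 < x / y.
Proof. intros; apply Rdiv_lt_0_compat; assumption. Qed.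

Lemma rpow_pos_aux (x k : R) : 0 < Rpower x k.
Proof. unfold Rpower; apply exp_pos. Qed.

Definition iadd (a b : Inum) : Inum :=
  ofcw (icen a + icen b) (iwid a * iwid b) (mul_pos_aux _ _ (iwid_pos a) (iwid_pos b)).
Definition isub (a b : Inum) : Inum :=
  ofcw (icen a - icen b) (iwid a / iwid b) (div_pos_aux _ _ (iwid_pos a) (iwid_pos b)).
Definition iscal (k : R) (a : Inum) : Inum :=
  ofcw (k * icen a) (Rpower (iwid a) k) (rpow_pos_aux _ _).
(* c / h = <c_c / h ; c_w ^ (1/h)>  (meaningful for h <> 0) *)
Definition idiv (c : Inum) (h : R) : Inum :=
  ofcw (icen c / h) (Rpower (iwid c) (/ h)) (rpow_pos_aux _ _).

(* zero interval number <0;1> (neutral for +), used to start finite sums *)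
Definition izero : Inum := ofcw 0 1 Rlt_0_1.

Fixpoint isum (g : nat -> Inum) (n : nat) : Inum :=
  match n with
  | O => izero
  | S m => iadd (isum g m) (g m)
  end.

Definition idist (a b : Inum) : R :=
  sqrt ((icen a - icen b) ^ 2 + (ln (iwid a) - ln (iwid b)) ^ 2).

Definition icont_on (f : R -> Inum) (a b : R) : Prop :=
  forall x, a <= x <= b -> forall eps, 0 < eps -> exists delta, 0 < delta /\
    forall y, a <= y <= b -> Rabs (y - x) < delta -> idist (f y) (f x) < eps.

Definition is_iderive_on (F : R -> Inum) (a b x : R) (D : Inum) : Prop :=
  forall eps, 0 < eps -> exists delta, 0 < delta /\
    forall h, h <> 0 -> Rabs h < delta -> a <= x + h <= b ->
      idist (idiv (isub (F (x + h)) (F x)) h) D < eps.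

Definition tagged_partition (a b : R) (n : nat) (t xi : nat -> R) : Prop :=
  t O = a /\ t n = b /\
  (forall i, (i < n)%nat -> t i < t (S i)) /\
  (forall i, (i < n)%nat -> t i <= xi i <= t (S i)).

Definition mesh_lt (n : nat) (t : nat -> R) (delta : R) : Prop :=
  forall i, (i < n)%nat -> t (S i) - t i < delta.

Definition riemann_sum (f : R -> Inum) (n : nat) (t xi : nat -> R) : Inum :=
  isum (fun i => iscal (t (S i) - t i) (f (xi i))) n.

Definition is_IR_integral (f : R -> Inum) (a b : R) (A : Inum) : Prop :=
  forall eps, 0 < eps -> exists delta, 0 < delta /\
    forall n t xi, tagged_partition a b n t xi -> mesh_lt n t delta ->
      idist (riemann_sum f n t xi) A < eps.

(* The map [a ↦ (a_c, ln a_w)] sends interval addition, subtraction, scaling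
   and division by a real to the corresponding operations on pairs of reals,
   and its coordinates are dominated by the distance, which is in turn
   dominated by the sum of the coordinate differences.  So both the hypotheses
   and the conclusion split into two real statements, one for [F_c, f_c] and
   one for [ln F_w, ln f_w], each of which is the real fundamental theorem of
   calculus for Riemann sums: on every cell of the partition the mean value
   theorem replaces the increment of the primitive by [f(c) (t_{i+1} - t_i)],
   and uniform continuity of [f] makes [f(c)] close to [f(ξ_i)]. *)
From Stdlib Require Import Reals Lra Lia.
From Coquelicot Require Import Coquelicot.
Open Scope R_scope.

Fixpoint rsum (u : nat -> R) (n : nat) : R :=
  match n with O => 0 | S m => rsum u m + u m end.

Lemma rsum_ext (u v : nat -> R) (n : nat) :
  (forall i, (i < n)%nat -> u i = v i) -> rsum u n = rsum v n.
Proof.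
  induction n as [|n IH]; intros Huv; simpl; [reflexivity|].
  rewrite IH, Huv; [reflexivity | lia | intros i Hi; apply Huv; lia].
Qed.

Lemma rsum_telescope (G : R -> R) (t : nat -> R) (n : nat) :
  rsum (fun i => G (t (S i)) - G (t i)) n = G (t n) - G (t O).
Proof. induction n as [|n IH]; simpl; [|rewrite IH]; ring. Qed.

Lemma rsum_abs_sub_le (u v w : nat -> R) (n : nat) :
  (forall i, (i < n)%nat -> Rabs (u i - v i) <= w i) ->
  Rabs (rsum u n - rsum v n) <= rsum w n.
Proof.
  induction n as [|n IH]; intros Hw; simpl.
  - rewrite Rminus_0_r, Rabs_R0; lra.
  - replace (rsum u n + u n - (rsum v n + v n))
      with ((rsum u n - rsum v n) + (u n - v n)) by ring.
    eapply Rle_trans; [apply Rabs_triang|].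
    apply Rplus_le_compat; [apply IH; intros i Hi|]; apply Hw; lia.
Qed.

Lemma tagged_partition_in (a b : R) (n : nat) (t xi : nat -> R) :
  tagged_partition a b n t xi -> forall i, (i <= n)%nat -> a <= t i <= b.
Proof.
  intros [Ht0 [Htn [Hinc _]]] i Hi; split.
  - induction i as [|i IH]; [lra|].
    specialize (IH ltac:(lia)); specialize (Hinc i ltac:(lia)); lra.
  - replace i with (n - (n - i))%nat by lia.
    induction (n - i)%nat as [|k IH]; [rewrite Nat.sub_0_r; lra|].
    destruct (Nat.le_gt_cases n k) as [Hk|Hk].
    + replace (n - S k)%nat with (n - k)%nat by lia; exact IH.
    + specialize (Hinc (n - S k)%nat ltac:(lia)).
      replace (S (n - S k)) with (n - k)%nat in Hinc by lia; lra.
Qed.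

Definition rcont_on (g : R -> R) (a b : R) : Prop :=
  forall x, a <= x <= b -> forall eps, 0 < eps -> exists delta, 0 < delta /\
    forall y, a <= y <= b -> Rabs (y - x) < delta -> Rabs (g y - g x) < eps.

Definition is_rderive_on (G : R -> R) (a b x l : R) : Prop :=
  forall eps, 0 < eps -> exists delta, 0 < delta /\
    forall h, h <> 0 -> Rabs h < delta -> a <= x + h <= b ->
      Rabs ((G (x + h) - G x) / h - l) < eps.

Definition rriemann_sum (g : R -> R) (n : nat) (t xi : nat -> R) : R :=
  rsum (fun i => (t (S i) - t i) * g (xi i)) n.

Definition is_R_integral (g : R -> R) (a b A : R) : Prop :=
  forall eps, 0 < eps -> exists delta, 0 < delta /\
    forall n t xi, tagged_partition a b n t xi -> mesh_lt n t delta ->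
      Rabs (rriemann_sum g n t xi - A) < eps.

Lemma is_rderive_on_rcont_on (G g : R -> R) (a b : R) :
  (forall x, a <= x <= b -> is_rderive_on G a b x (g x)) -> rcont_on G a b.
Proof.
  intros HG x Hx eps Heps.
  destruct (HG x Hx 1 Rlt_0_1) as [d [Hd Hslope]].
  set (K := 1 + Rabs (g x)).
  assert (HK : 0 < K) by (unfold K; pose proof (Rabs_pos (g x)); lra).
  exists (Rmin d (eps / K)); split.
  { apply Rmin_pos; [lra | apply Rdiv_lt_0_compat; lra]. }
  intros y Hy Hyx.
  destruct (Req_dec y x) as [->|Hne]; [rewrite Rminus_diag, Rabs_R0; lra|].
  assert (Hh : y - x <> 0) by lra.
  assert (Hq := Hslope (y - x) Hh ltac:(pose proof (Rmin_l d (eps / K)); lra)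
                  ltac:(replace (x + (y - x)) with y by ring; lra)).
  replace (x + (y - x)) with y in Hq by ring.
  set (q := (G y - G x) / (y - x)) in Hq.
  assert (Hq_bound : Rabs q <= K).
  { replace q with ((q - g x) + g x) by ring.
    eapply Rle_trans; [apply Rabs_triang|]; unfold K; lra. }
  assert (Hh_bound : Rabs (y - x) * K < eps).
  { pose proof (Rmin_r d (eps / K)).
    apply (Rmult_lt_compat_r K) in Hyx; [|lra].
    replace eps with (eps / K * K) by (field; lra).
    eapply Rlt_le_trans; [exact Hyx|].
    apply Rmult_le_compat_r; lra. }
  replace (G y - G x) with (q * (y - x)) by (unfold q; field; exact Hh).
  rewrite Rabs_mult.
  pose proof (Rabs_pos q); pose proof (Rabs_pos (y - x)); nra.
Qed.

(* [G] is only differentiable within [a, b]: composing with the clamp onto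
   [a, b] gives a function continuous on all of [R], as [MVT_gen] requires. *)
Section Clamp.

Variables a b : R.
Hypothesis hab : a <= b.

Definition clamp (x : R) : R := Rmax a (Rmin b x).

Lemma clamp_in (x : R) : a <= clamp x <= b.
Proof. unfold clamp, Rmax, Rmin; repeat destruct Rle_dec; lra. Qed.

Lemma clamp_id (x : R) : a <= x <= b -> clamp x = x.
Proof. intros; unfold clamp, Rmax, Rmin; repeat destruct Rle_dec; lra. Qed.

Lemma clamp_lipschitz (x y : R) : Rabs (clamp y - clamp x) <= Rabs (y - x).
Proof.
  unfold clamp, Rmax, Rmin; repeat destruct Rle_dec;
  unfold Rabs; repeat destruct Rcase_abs; lra.
Qed.

Lemma rcont_on_clamp (g : R -> R) :
  rcont_on g a b -> forall x, continuity_pt (fun y => g (clamp y)) x.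
Proof.
  intros Hg x eps Heps.
  destruct (Hg (clamp x) (clamp_in x) eps Heps) as [d [Hd Hy]].
  exists d; split; [lra|].
  intros y [_ Hyx]; apply Hy; [apply clamp_in|].
  exact (Rle_lt_trans _ _ _ (clamp_lipschitz x y) Hyx).
Qed.

Lemma is_rderive_on_clamp (G : R -> R) (x l : R) :
  a < x < b -> is_rderive_on G a b x l -> is_derive (fun y => G (clamp y)) x l.
Proof.
  intros Hx HG; apply is_derive_Reals; intros eps Heps.
  destruct (HG eps Heps) as [d [Hd Hh]].
  set (r := Rmin d (Rmin (x - a) (b - x))).
  assert (Hr : 0 < r) by (apply Rmin_pos; [|apply Rmin_pos]; lra).
  exists (mkposreal r Hr); simpl; intros h Hh0 Hhr.
  assert (Hr_le : r <= d /\ r <= x - a /\ r <= b - x).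
  { pose proof (Rmin_l d (Rmin (x - a) (b - x))).
    pose proof (Rmin_r d (Rmin (x - a) (b - x))).
    pose proof (Rmin_l (x - a) (b - x)); pose proof (Rmin_r (x - a) (b - x)).
    unfold r in *; lra. }
  assert (Hxh : a <= x + h <= b)
    by (unfold Rabs in Hhr; destruct Rcase_abs in Hhr; lra).
  rewrite (clamp_id (x + h) Hxh), (clamp_id x) by lra.
  apply Hh; [exact Hh0 | lra | exact Hxh].
Qed.

End Clamp.

Lemma mean_value_on (G g : R -> R) (a b u v : R) :
  (forall x, a <= x <= b -> is_rderive_on G a b x (g x)) ->
  a <= u -> u < v -> v <= b ->
  exists c, u <= c <= v /\ G v - G u = g c * (v - u).
Proof.
  intros HG Hau Huv Hvb.
  destruct (MVT_gen (fun y => G (clamp a b y)) u v g) as [c [Hc HGc]].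
  - rewrite Rmin_left, Rmax_right by lra; intros x Hx.
    apply is_rderive_on_clamp; [lra | lra | apply HG; lra].
  - intros x _; apply rcont_on_clamp; [lra|].
    exact (is_rderive_on_rcont_on G g a b HG).
  - rewrite Rmin_left, Rmax_right in Hc by lra.
    rewrite !clamp_id in HGc by lra.
    exists c; split; assumption.
Qed.

Lemma rcont_on_uniform (g : R -> R) (a b : R) :
  a <= b -> rcont_on g a b ->
  forall eps, 0 < eps -> exists delta, 0 < delta /\
    forall x y, a <= x <= b -> a <= y <= b -> Rabs (x - y) < delta ->
      Rabs (g x - g y) < eps.
Proof.
  intros hab Hg eps Heps.
  destruct (Heine (fun y => g (clamp a b y)) (fun x => a <= x <= b) (compact_P3 a b)
              (fun x _ => rcont_on_clamp a b hab g Hg x) (mkposreal eps Heps))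
    as [delta Hdelta].
  exists delta; split; [apply cond_pos|].
  intros x y Hx Hy Hxy.
  specialize (Hdelta x y Hx Hy Hxy); simpl in Hdelta.
  rewrite !clamp_id in Hdelta by lra; exact Hdelta.
Qed.

Lemma is_R_integral_derive (G g : R -> R) (a b : R) :
  a < b -> rcont_on g a b ->
  (forall x, a <= x <= b -> is_rderive_on G a b x (g x)) ->
  is_R_integral g a b (G b - G a).
Proof.
  intros hab Hg HG eps Heps.
  set (e := eps / (2 * (b - a))).
  assert (He : 0 < e) by (apply Rdiv_lt_0_compat; lra).
  destruct (rcont_on_uniform g a b ltac:(lra) Hg e He) as [d [Hd Hunif]].
  exists d; split; [exact Hd|].
  intros n t xi Hp Hmesh.
  pose proof (tagged_partition_in a b n t xi Hp) as Hin.
  destruct Hp as [Ht0 [Htn [Hinc Htag]]].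
  replace (G b - G a) with (G (t n) - G (t O)) by (rewrite Ht0, Htn; reflexivity).
  rewrite <- rsum_telescope.
  apply Rle_lt_trans with (rsum (fun i => e * t (S i) - e * t i) n).
  - apply rsum_abs_sub_le; intros i Hi.
    specialize (Hinc i Hi); specialize (Htag i Hi); specialize (Hmesh i Hi).
    pose proof (Hin i ltac:(lia)); pose proof (Hin (S i) ltac:(lia)).
    destruct (mean_value_on G g a b (t i) (t (S i)) HG) as [c [Hc ->]]; try lra.
    replace ((t (S i) - t i) * g (xi i) - g c * (t (S i) - t i))
      with ((t (S i) - t i) * (g (xi i) - g c)) by ring.
    rewrite Rabs_mult, Rabs_right by lra.
    replace (e * t (S i) - e * t i) with ((t (S i) - t i) * e) by ring.
    apply Rmult_le_compat_l; [lra|]; left.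
    apply Hunif; try lra.
    unfold Rabs; destruct Rcase_abs; lra.
  - rewrite (rsum_telescope (fun x => e * x)), Ht0, Htn.
    replace (e * b - e * a) with (eps / 2) by (unfold e; field; lra); lra.
Qed.

Definition ilw (a : Inum) : R := ln (iwid a).

Lemma icen_ofcw (c w : R) (H : 0 < w) : icen (ofcw c w H) = c.
Proof. unfold icen, ofcw; simpl; field. Qed.

Lemma iwid_ofcw (c w : R) (H : 0 < w) : iwid (ofcw c w H) = w.
Proof. unfold iwid, ofcw; simpl; field. Qed.

Lemma idist_le_coords (a b : Inum) :
  idist a b <= Rabs (icen a - icen b) + Rabs (ilw a - ilw b).
Proof.
  unfold idist, ilw.
  set (u := icen a - icen b); set (v := ln (iwid a) - ln (iwid b)).
  pose proof (Rabs_pos u); pose proof (Rabs_pos v).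
  rewrite <- (sqrt_pow2 (Rabs u + Rabs v)) by lra.
  apply sqrt_le_1_alt; rewrite <- (pow2_abs u), <- (pow2_abs v); nra.
Qed.

Record inum_coord (phi : Inum -> R) : Prop := {
  coord_izero : phi izero = 0;
  coord_iadd : forall a b, phi (iadd a b) = phi a + phi b;
  coord_isub : forall a b, phi (isub a b) = phi a - phi b;
  coord_iscal : forall k a, phi (iscal k a) = k * phi a;
  coord_idiv : forall a h, phi (idiv a h) = phi a / h;
  coord_le_idist : forall a b, Rabs (phi a - phi b) <= idist a b }.

Lemma icen_coord : inum_coord icen.
Proof.
  split; intros; unfold izero, iadd, isub, iscal, idiv; rewrite ?icen_ofcw;
    try reflexivity.
  unfold idist; destruct (sqrt_plus_sqr (icen a - icen b) (ln (iwid a) - ln (iwid b))).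
  eapply Rle_trans; [apply Rmax_l | eassumption].
Qed.

Lemma ilw_coord : inum_coord ilw.
Proof.
  split; intros; unfold ilw, izero, iadd, isub, iscal, idiv; rewrite ?iwid_ofcw.
  - apply ln_1.
  - apply ln_mult; apply iwid_pos.
  - apply ln_div; apply iwid_pos.
  - unfold Rpower; apply ln_exp.
  - unfold Rpower; rewrite ln_exp; unfold Rdiv; ring.
  - unfold idist; destruct (sqrt_plus_sqr (icen a - icen b) (ln (iwid a) - ln (iwid b))).
    eapply Rle_trans; [apply Rmax_r | eassumption].
Qed.

Section Coordinate.

Variable phi : Inum -> R.
Hypothesis Hphi : inum_coord phi.

Lemma coord_isum (g : nat -> Inum) (n : nat) :
  phi (isum g n) = rsum (fun i => phi (g i)) n.
Proof.
  induction n as [|n IH]; simpl.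
  - apply (coord_izero _ Hphi).
  - rewrite (coord_iadd _ Hphi), IH; reflexivity.
Qed.

Lemma coord_riemann_sum (f : R -> Inum) (n : nat) (t xi : nat -> R) :
  phi (riemann_sum f n t xi) = rriemann_sum (fun x => phi (f x)) n t xi.
Proof.
  unfold riemann_sum, rriemann_sum; rewrite coord_isum.
  apply rsum_ext; intros i _; apply (coord_iscal _ Hphi).
Qed.

Lemma coord_cont (f : R -> Inum) (a b : R) :
  icont_on f a b -> rcont_on (fun x => phi (f x)) a b.
Proof.
  intros Hf x Hx eps Heps.
  destruct (Hf x Hx eps Heps) as [d [Hd Hy]].
  exists d; split; [exact Hd|]; intros y Hyab Hyx.
  eapply Rle_lt_trans; [apply (coord_le_idist _ Hphi) | apply Hy; assumption].
Qed.

Lemma coord_derive (F : R -> Inum) (a b x : R) (D : Inum) :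
  is_iderive_on F a b x D -> is_rderive_on (fun y => phi (F y)) a b x (phi D).
Proof.
  intros HF eps Heps.
  destruct (HF eps Heps) as [d [Hd Hh]].
  exists d; split; [exact Hd|]; intros h Hh0 Hhd Hxh.
  rewrite <- (coord_isub _ Hphi), <- (coord_idiv _ Hphi).
  eapply Rle_lt_trans; [apply (coord_le_idist _ Hphi) | apply Hh; assumption].
Qed.

Lemma coord_ftc (f F : R -> Inum) (a b : R) :
  a < b -> icont_on f a b ->
  (forall x, a <= x <= b -> is_iderive_on F a b x (f x)) ->
  is_R_integral (fun x => phi (f x)) a b (phi (isub (F b) (F a))).
Proof.
  intros hab Hf HF; rewrite (coord_isub _ Hphi).
  apply (is_R_integral_derive (fun y => phi (F y))); [exact hab | apply coord_cont; exact Hf|].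
  intros x Hx; apply coord_derive, HF, Hx.
Qed.

End Coordinate.

Lemma is_IR_integral_of_coords (f : R -> Inum) (a b : R) (A : Inum) :
  is_R_integral (fun x => icen (f x)) a b (icen A) ->
  is_R_integral (fun x => ilw (f x)) a b (ilw A) ->
  is_IR_integral f a b A.
Proof.
  intros Hcen Hlw eps Heps.
  destruct (Hcen (eps / 2) ltac:(lra)) as [d1 [Hd1 H1]].
  destruct (Hlw (eps / 2) ltac:(lra)) as [d2 [Hd2 H2]].
  exists (Rmin d1 d2); split; [apply Rmin_pos; assumption|].
  intros n t xi Hp Hmesh.
  pose proof (Rmin_l d1 d2); pose proof (Rmin_r d1 d2).
  specialize (H1 n t xi Hp ltac:(intros i Hi; specialize (Hmesh i Hi); lra)).
  specialize (H2 n t xi Hp ltac:(intros i Hi; specialize (Hmesh i Hi); lra)).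
  rewrite <- (coord_riemann_sum _ icen_coord) in H1.
  rewrite <- (coord_riemann_sum _ ilw_coord) in H2.
  eapply Rle_lt_trans; [apply idist_le_coords | lra].
Qed.

Theorem theorem5p7 (f F : R -> Inum) (a b : R) (hab : a < b) :
  icont_on f a b ->
  (forall x, a <= x <= b -> is_iderive_on F a b x (f x)) ->
  is_IR_integral f a b (isub (F b) (F a)).
Proof.
  intros Hf HF.
  apply is_IR_integral_of_coords;
    [apply (coord_ftc _ icen_coord) | apply (coord_ftc _ ilw_coord)]; assumption.
Qed.
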